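(* Consider the averaged switched RLC circuit $$-L\dot I=RI+\Gamma(u)V-B(u)V_s,\qquad C\dot V=\Gamma(u)^\top I-GV,$$ where $\Gamma(u)=u\Gamma_1+(1-u)\Gamma_0$, $B(u)=uB_1+(1-u)B_0$, $u\in[0,1]$ is the duty cycle and $V_s\in\mathbb{R}^m$ is a constant voltage source, together with its extended dynamics $$-L\ddot I=R\dot I+\Gamma(u)\dot V+\big((\Gamma_1-\Gamma_0)V-(B_1-B_0)V_s\big)\upsilon,\quad C\ddot V=\Gamma(u)^\top\dot I+(\Gamma_1-\Gamma_0)^\top I\,\upsilon-G\dot V,\quad \dot u=\upsilon,$$ with extended state $(I,V,\dot I,\dot V,u)$ and input $\upsilon\in\mathbb{R}$. Assume $L,C$ are constant symmetric positive definite and $R,G$ are symmetric positive semi-definite. Then the extended system is passive with respect to the storage function $S=\tfrac12\dot I^\top L\dot I+\tfrac12\dot V^\top C\dot V$ and the port-variables $\upsilon$ and $$y=\dot V^\top(\Gamma_1-\Gamma_0)^\top I-\dot I^\top(\Gamma_1-\Gamma_0)V-\dot I^\top(B_0-B_1)V_s,$$ i.e. $\dot S\le \upsilon\, y$ along trajectories.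
   Context: $I\in\mathbb{R}^\sigma$ (inductor currents), $V\in\mathbb{R}^\rho$ (capacitor voltages), $L\in\mathbb{R}^{\sigma\times\sigma}$, $C\in\mathbb{R}^{\rho\times\rho}$, $R\in\mathbb{R}^{\sigma\times\sigma}$, $G\in\mathbb{R}^{\rho\times\rho}$, $\Gamma_0,\Gamma_1\in\mathbb{R}^{\sigma\times\rho}$, $B_0,B_1\in\mathbb{R}^{\sigma\times m}$ constant. Passivity with respect to storage $S\ge0$ and port-variables (input $a$, output $b$) means $\dot S\le a^\top b$ along trajectories. *)

From mathcomp Require Import all_boot all_algebra.
From mathcomp Require Import all_classical all_reals all_analysis.
Import numFieldNormedType.Exports.
Set Implicit Arguments. Unset Strict Implicit. Unset Printing Implicit Defensive.
Local Open Scope ring_scope.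

Definition scal {K : Type} (M : 'M[K]_1) : K := M ord0 ord0.

Definition qform {K : pzRingType} {n : nat} (x : 'cV[K]_n) (A : 'M[K]_n) : K :=
  scal (x^T *m A *m x).

Definition sym_posdef {K : numDomainType} {n : nat} (A : 'M[K]_n) : Prop :=
  A^T = A /\ forall x : 'cV[K]_n, x != 0 -> 0 < qform x A.

Definition sym_possemidef {K : numDomainType} {n : nat} (A : 'M[K]_n) : Prop :=
  A^T = A /\ forall x : 'cV[K]_n, 0 <= qform x A.

Definition mxconv {K : pzRingType} {p q : nat} (M0 M1 : 'M[K]_(p, q)) (u : K)
  : 'M[K]_(p, q) := u *: M1 + (1 - u) *: M0.

(* Since L and C are symmetric, S' = Id^T L Id' + Vd^T C Vd'.  Substituting
   the extended dynamics, the interconnection terms Id^T Gamma(u) Vd and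
   Vd^T Gamma(u)^T Id cancel, leaving S' = ups y - Id^T R Id - Vd^T G Vd, and
   the dissipation terms are nonpositive since R and G are positive
   semi-definite. *)

From mathcomp Require Import all_boot all_algebra.
From mathcomp Require Import all_classical all_reals all_analysis.
Import numFieldNormedType.Exports.
From mathcomp Require Import ring lra.
Import GRing.Theory Num.Theory.
Local Open Scope ring_scope.
Local Open Scope classical_set_scope.

Section ScalarEntry.
Context {K : comPzRingType}.

Lemma scal_trmx (M : 'M[K]_1) : scal M^T = scal M.
Proof. by rewrite /scal mxE. Qed.

Lemma scalD (M N : 'M[K]_1) : scal (M + N) = scal M + scal N.
Proof. by rewrite /scal mxE. Qed.

Lemma scalN (M : 'M[K]_1) : scal (- M) = - scal M.
Proof. by rewrite /scal mxE. Qed.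

Lemma scalZ (k : K) (M : 'M[K]_1) : scal (k *: M) = k * scal M.
Proof. by rewrite /scal mxE. Qed.

Lemma scal_bilform_trmx p q (x : 'cV[K]_p) (A : 'M[K]_(p, q)) (y : 'cV[K]_q) :
  scal (x^T *m A *m y) = scal (y^T *m A^T *m x).
Proof. by rewrite -scal_trmx !trmx_mul trmxK mulmxA. Qed.

Lemma scal_bilform_sum p q (x : 'cV[K]_p) (A : 'M[K]_(p, q)) (y : 'cV[K]_q) :
  scal (x^T *m A *m y) = \sum_(j < q) \sum_(i < p) x i 0 * A i j * y j 0.
Proof.
rewrite /scal !mxE; apply: eq_bigr => j _; rewrite !mxE big_distrl /=.
by apply: eq_bigr => i _; rewrite !mxE.
Qed.

End ScalarEntry.

Section PowerBalance.
Context {K : comPzRingType} {sigma rho m : nat}.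
Context {L Rr : 'M[K]_sigma} {C G : 'M[K]_rho}.
Context {Gam0 Gam1 : 'M[K]_(sigma, rho)} {B0 B1 : 'M[K]_(sigma, m)}.
Context {Vs : 'cV[K]_m}.

Lemma extended_power_balance {I dI ddI : 'cV[K]_sigma} {V dV ddV : 'cV[K]_rho}
    {u ups : K} :
  - (L *m ddI) = Rr *m dI + mxconv Gam0 Gam1 u *m dV
                 + ups *: ((Gam1 - Gam0) *m V - (B1 - B0) *m Vs) ->
  C *m ddV = (mxconv Gam0 Gam1 u)^T *m dI + ups *: ((Gam1 - Gam0)^T *m I)
             - G *m dV ->
  scal (dI^T *m L *m ddI) + scal (dV^T *m C *m ddV) =
    ups * (scal (dV^T *m (Gam1 - Gam0)^T *m I)
           - scal (dI^T *m (Gam1 - Gam0) *m V)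
           - scal (dI^T *m (B0 - B1) *m Vs))
    - qform dI Rr - qform dV G.
Proof.
move=> eqI eqV.
rewrite -!mulmxA -[L *m ddI]opprK eqI eqV.
rewrite !(mulmxDr, mulmxN, mulmxBr, =^~ scalemxAr).
rewrite !(scalD, scalN, scalZ) !mulmxA /qform.
rewrite (@scal_bilform_trmx _ _ _ dV (mxconv Gam0 Gam1 u)^T) trmxK.
rewrite -[B0 - B1]opprB mulmxN mulNmx scalN.
ring.
Qed.

End PowerBalance.

Section BilinearDerivative.
Context {R : realType}.

Lemma is_derive_mx_entry {p q} {f : R -> 'M[R]_(p, q)} {t} i j :
  derivable f t 1 -> is_derive t (1 : R) (fun x => f x i j) ('D_1 f t i j).
Proof.
move=> df; have /derivable_mxP dfij := df.
by apply: DeriveDef; [exact: dfij | rewrite derive_mx // mxE].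
Qed.

Lemma is_derive_bilform {p q} (A : 'M[R]_(p, q)) {f : R -> 'cV[R]_p}
    {g : R -> 'cV[R]_q} {t} :
  derivable f t 1 -> derivable g t 1 ->
  is_derive t (1 : R) (fun x => scal ((f x)^T *m A *m g x))
    (scal (('D_1 f t)^T *m A *m g t) + scal ((f t)^T *m A *m 'D_1 g t)).
Proof.
move=> df dg.
have -> : (fun x => scal ((f x)^T *m A *m g x)) =
    \sum_(j < q) \sum_(i < p) (fun x => f x i 0 * A i j * g x j 0).
  apply/funext => x; rewrite scal_bilform_sum fct_sumE.
  by apply: eq_bigr => j _; rewrite fct_sumE.
rewrite !scal_bilform_sum -big_split; apply: is_derive_sum => j.
rewrite -big_split; apply: is_derive_sum => i /=.
have -> : (fun x => f x i 0 * A i j * g x j 0) =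
    (fun x => f x i 0) * (A i j \*: (fun x => g x j 0)).
  by apply/funext => x /=; rewrite mulrA.
apply: is_derive_eq (is_deriveM (is_derive_mx_entry i 0 df)
  (is_deriveZ (A i j) (is_derive_mx_entry j 0 dg))) _.
by rewrite /GRing.scale /= -[A i j *: _]/(A i j * _); ring.
Qed.

Lemma is_derive_half_qform {n} {A : 'M[R]_n} {f : R -> 'cV[R]_n} {t} :
  A^T = A -> derivable f t 1 ->
  is_derive t (1 : R) (fun x => 2^-1 * qform (f x) A)
    (scal ((f t)^T *m A *m 'D_1 f t)).
Proof.
move=> symA df.
have -> : (fun x => 2^-1 * qform (f x) A) =
    2^-1 \*: (fun x => scal ((f x)^T *m A *m f x)) by [].
apply: is_derive_eq (is_deriveZ 2^-1 (is_derive_bilform A df df)) _.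
rewrite (@scal_bilform_trmx _ _ _ ('D_1 f t)) symA /GRing.scale /=.
by field.
Qed.

End BilinearDerivative.

Theorem proposition2 (R : realType) (sigma rho m : nat)
  (L Rr : 'M[R]_sigma) (C G : 'M[R]_rho)
  (Gam0 Gam1 : 'M[R]_(sigma, rho)) (B0 B1 : 'M[R]_(sigma, m)) (Vs : 'cV[R]_m)
  (I Id : R -> 'cV[R]_sigma) (V Vd : R -> 'cV[R]_rho) (u ups : R -> R) :
  sym_posdef L -> sym_posdef C -> sym_possemidef Rr -> sym_possemidef G ->
  (forall t, u t \in `[0, 1]) ->
  (forall t, derivable I t 1) -> (forall t, derivable V t 1) ->
  (forall t, derivable Id t 1) -> (forall t, derivable Vd t 1) ->
  (forall t, derivable u t 1) ->
  (forall t, derive1 I t = Id t) ->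
  (forall t, derive1 V t = Vd t) ->
  (forall t, derive1 u t = ups t) ->
  (forall t, - (L *m derive1 Id t) =
       Rr *m Id t + mxconv Gam0 Gam1 (u t) *m Vd t
       + ups t *: ((Gam1 - Gam0) *m V t - (B1 - B0) *m Vs)) ->
  (forall t, C *m derive1 Vd t =
       (mxconv Gam0 Gam1 (u t))^T *m Id t + ups t *: ((Gam1 - Gam0)^T *m I t)
       - G *m Vd t) ->
  let S := fun t => 2^-1 * qform (Id t) L + 2^-1 * qform (Vd t) C in
  let y := fun t => scal ((Vd t)^T *m (Gam1 - Gam0)^T *m I t)
                    - scal ((Id t)^T *m (Gam1 - Gam0) *m V t)
                    - scal ((Id t)^T *m (B0 - B1) *m Vs) in
  forall t, derivable S t 1 /\ derive1 S t <= ups t * y t.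
Proof.
move=> [symL _] [symC _] [_ psdR] [_ psdG] _ _ _ dId dVd _ _ _ _ eqI eqV S y t.
have dS : is_derive t (1 : R) S
    (scal ((Id t)^T *m L *m 'D_1 Id t) + scal ((Vd t)^T *m C *m 'D_1 Vd t)).
  exact: is_deriveD (is_derive_half_qform symL (dId t))
                    (is_derive_half_qform symC (dVd t)).
split; first by case: dS.
have balance := extended_power_balance (eqI t) (eqV t).
rewrite derive1E derive_val -!derive1E balance /y.
by have := psdR (Id t); have := psdG (Vd t); lra.
Qed.
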